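(* For every $\psi\in\mathsf{N4CK}$, we have $\overline{Tr}(\psi)\in\mathsf{FSK}^d$.
   Context: $\mathcal{L}_\Box$ is built from propositional variables with $\wedge,\vee,\to$, strong negation $\sim$, and a unary modality $\Box$; $\mathcal{L}_{\Box\!\!\rightarrow}$ is built likewise but with a binary would-conditional $\Box\!\!\rightarrow$ instead of $\Box$. $\mathsf{FSK}^d$ is the modal logic over $\mathcal{L}_\Box$ given by Nelsonian modal models $(W,\leq,R,V^+,V^-)$: $\leq$ a preorder, $V^\pm$ assigning upward-closed sets, $R\subseteq W\times W$ with (i) $w\leq w'$ and $R(w,v)$ imply $R(w',v')$ for some $v'\geq v$, (ii) $R(w,v)$ and $v\leq v'$ imply $R(w',v')$ for some $w'\geq w$; verification/falsification as in Nelson's logic $\mathsf{N4}$ (atoms by $V^\pm$; $\wedge$ verified iff both verified, falsified iff one falsified; $\vee$ dually; $\sim$ swaps; $w\models^+\psi\to\chi$ iff for all $v\geq w$, $v\models^+\psi$ implies $v\models^+\chi$; $w\models^-\psi\to\chi$ iff $w\models^+\psi$ and $w\models^-\chi$), plus $w\models^+\Box\psi$ iff for all $v\geq w$ and $u$ with $R(v,u)$, $u\models^+\psi$, and $w\models^-\Box\psi$ iff some $u$ has $R(w,u)$ and $u\models^-\psi$; validity means verification everywhere. $\mathsf{N4CK}$ is the analogous conditional logic over $\mathcal{L}_{\Box\!\!\rightarrow}$: models $(W,\leq,R,V^+,V^-)$ with $R\subseteq W\times(\mathcal{P}(W)\times\mathcal{P}(W))\times W$ satisfying (i),(ii) for each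 $R_{(X,Y)}$; $w\models^+\psi\Box\!\!\rightarrow\chi$ iff for all $v\geq w$ and $u$ with $R_{\|\psi\|}(v,u)$, $u\models^+\chi$; $w\models^-\psi\Box\!\!\rightarrow\chi$ iff some $u$ has $R_{\|\psi\|}(w,u)$ and $u\models^-\chi$, where $\|\psi\|=(\{w\mid w\models^+\psi\},\{w\mid w\models^-\psi\})$; $\psi\in\mathsf{N4CK}$ means $\psi$ is valid. The map $\overline{Tr}:\mathcal{L}_{\Box\!\!\rightarrow}\to\mathcal{L}_\Box$ is defined by $\overline{Tr}(p)=p$, $\overline{Tr}(\sim\psi)=\sim\overline{Tr}(\psi)$, $\overline{Tr}(\psi\ast\chi)=\overline{Tr}(\psi)\ast\overline{Tr}(\chi)$ for $\ast\in\{\wedge,\vee,\to\}$, and $\overline{Tr}(\psi\Box\!\!\rightarrow\chi)=\Box\overline{Tr}(\chi)$ (the antecedent is dropped). *)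

Inductive fmB : Type :=
| BVar : nat -> fmB
| BAnd : fmB -> fmB -> fmB
| BOr  : fmB -> fmB -> fmB
| BImp : fmB -> fmB -> fmB
| BNeg : fmB -> fmB
| BBox : fmB -> fmB.

Inductive fmC : Type :=
| CVar  : nat -> fmC
| CAnd  : fmC -> fmC -> fmC
| COr   : fmC -> fmC -> fmC
| CImp  : fmC -> fmC -> fmC
| CNeg  : fmC -> fmC
| CCond : fmC -> fmC -> fmC.

Record NModel : Type := {
  mW : Type;
  mle : mW -> mW -> Prop;
  mR : mW -> mW -> Prop;
  mVp : nat -> mW -> Prop;
  mVm : nat -> mW -> Prop;
  mle_refl : forall w, mle w w;
  mle_trans : forall w v u, mle w v -> mle v u -> mle w u;
  mVp_up : forall n w v, mle w v -> mVp n w -> mVp n v;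
  mVm_up : forall n w v, mle w v -> mVm n w -> mVm n v;
  mR_i : forall w w' v, mle w w' -> mR w v -> exists v', mle v v' /\ mR w' v';
  mR_ii : forall w v v', mR w v -> mle v v' -> exists w', mle w w' /\ mR w' v'
}.

Section ModalSem.
Variable M : NModel.

Fixpoint verB (w : mW M) (f : fmB) : Prop :=
  match f with
  | BVar n => mVp M n w
  | BAnd a b => verB w a /\ verB w b
  | BOr a b => verB w a \/ verB w b
  | BImp a b => forall v, mle M w v -> verB v a -> verB v b
  | BNeg a => falB w a
  | BBox a => forall v u, mle M w v -> mR M v u -> verB u a
  end
with falB (w : mW M) (f : fmB) : Prop :=
  match f with
  | BVar n => mVm M n w
  | BAnd a b => falB w a \/ falB w b
  | BOr a b => falB w a /\ falB w b
  | BImp a b => verB w a /\ falB w b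
  | BNeg a => verB w a
  | BBox a => exists u, mR M w u /\ falB u a
  end.
End ModalSem.

Definition FSKd (f : fmB) : Prop := forall (M : NModel) (w : mW M), verB M w f.

(** Subsets
    are represented as predicates W -> Prop; R is required to depend only on
    the extension of X and Y (so it is really a function of P(W) x P(W)). *)
Record CModel : Type := {
  cW : Type;
  cle : cW -> cW -> Prop;
  cR : (cW -> Prop) -> (cW -> Prop) -> cW -> cW -> Prop;
  cVp : nat -> cW -> Prop;
  cVm : nat -> cW -> Prop;
  cle_refl : forall w, cle w w;
  cle_trans : forall w v u, cle w v -> cle v u -> cle w u;
  cVp_up : forall n w v, cle w v -> cVp n w -> cVp n v;
  cVm_up : forall n w v, cle w v -> cVm n w -> cVm n v;
  cR_ext : forall (X X' Y Y' : cW -> Prop) w v,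
      (forall x, X x <-> X' x) -> (forall y, Y y <-> Y' y) ->
      cR X Y w v -> cR X' Y' w v;
  cR_i : forall X Y w w' v, cle w w' -> cR X Y w v ->
      exists v', cle v v' /\ cR X Y w' v';
  cR_ii : forall X Y w v v', cR X Y w v -> cle v v' ->
      exists w', cle w w' /\ cR X Y w' v'
}.

Section CondSem.
Variable M : CModel.

Fixpoint verC (w : cW M) (f : fmC) : Prop :=
  match f with
  | CVar n => cVp M n w
  | CAnd a b => verC w a /\ verC w b
  | COr a b => verC w a \/ verC w b
  | CImp a b => forall v, cle M w v -> verC v a -> verC v b
  | CNeg a => falC w a
  | CCond a b => forall v u, cle M w v ->
      cR M (fun x => verC x a) (fun x => falC x a) v u -> verC u b
  end
with falC (w : cW M) (f : fmC) : Prop :=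
  match f with
  | CVar n => cVm M n w
  | CAnd a b => falC w a \/ falC w b
  | COr a b => falC w a /\ falC w b
  | CImp a b => verC w a /\ falC w b
  | CNeg a => verC w a
  | CCond a b => exists u,
      cR M (fun x => verC x a) (fun x => falC x a) w u /\ falC u b
  end.
End CondSem.

Definition N4CK (f : fmC) : Prop := forall (M : CModel) (w : cW M), verC M w f.

Fixpoint Trbar (f : fmC) : fmB :=
  match f with
  | CVar n => BVar n
  | CAnd a b => BAnd (Trbar a) (Trbar b)
  | COr a b => BOr (Trbar a) (Trbar b)
  | CImp a b => BImp (Trbar a) (Trbar b)
  | CNeg a => BNeg (Trbar a)
  | CCond _ b => BBox (Trbar b)
  end.

(** A Nelsonian modal model is a conditional model whose accessibility
    relation ignores the proposition indexing it.  In such a model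
    [psi []-> chi] has the verification and falsification conditions of
    [Box chi], so by induction every formula is verified (falsified) exactly
    where its translation is, and validity in all conditional models
    transfers to validity in all modal models. *)


Definition cmodel_of_nmodel (M : NModel) : CModel :=
  {| cW := mW M; cle := mle M; cR := fun _ _ => mR M;
     cVp := mVp M; cVm := mVm M;
     cle_refl := mle_refl M; cle_trans := mle_trans M;
     cVp_up := mVp_up M; cVm_up := mVm_up M;
     cR_ext := fun _ _ _ _ _ _ _ _ h => h;
     cR_i := fun _ _ => mR_i M;
     cR_ii := fun _ _ => mR_ii M |}.

Lemma Trbar_cmodel_of_nmodel (M : NModel) (psi : fmC) (w : mW M) :
  (verC (cmodel_of_nmodel M) w psi <-> verB M w (Trbar psi)) /\
  (falC (cmodel_of_nmodel M) w psi <-> falB M w (Trbar psi)).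
Proof.
  revert w.
  induction psi as [n | a IHa b IHb | a IHa b IHb | a IHa b IHb | a IHa
                   | a _ b IHb]; intros w; simpl.
  - tauto.
  - destruct (IHa w), (IHb w); tauto.
  - destruct (IHa w), (IHb w); tauto.
  - split.
    + split; intros H v Hwv; specialize (H v Hwv);
        destruct (IHa v), (IHb v); tauto.
    + destruct (IHa w), (IHb w); tauto.
  - destruct (IHa w); tauto.
  - split.
    + split; intros H v u Hwv Hvu; specialize (H v u Hwv Hvu);
        destruct (IHb u); tauto.
    + split; intros [u [Hwu Hu]]; exists u; destruct (IHb u); tauto.
Qed.

Lemma verB_Trbar_of_verC (M : NModel) (psi : fmC) (w : mW M) :
  verC (cmodel_of_nmodel M) w psi -> verB M w (Trbar psi).
Proof. apply (Trbar_cmodel_of_nmodel M psi w). Qed.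

Theorem corollary2 : forall psi : fmC, N4CK psi -> FSKd (Trbar psi).
Proof.
  intros psi Hpsi M w.
  apply verB_Trbar_of_verC, Hpsi.
Qed.
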